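(* Let $f,g:(0,\infty)\to\mathbb{R}$ be convex functions with $f(1)=g(1)=0$. Then the set of $(f,g)$-achievable points is a convex subset of $\mathbb{R}^2$.
   Context: For a convex function $f:(0,\infty)\to\mathbb{R}$ with $f(1)=0$, set $f(0)=\lim_{t\to0}f(t)$, $f^{\ast}(t)=tf(t^{-1})$ and $f^{\ast}(0)=\lim_{t\to\infty}f(t)/t$. If $P,Q$ are probability measures absolutely continuous with respect to a measure $\mu$ with densities $p=dP/d\mu$, $q=dQ/d\mu$, the $f$-divergence is $D_f(P,Q)=\int_{\{q>0\}} f(p/q)\,dQ+f^{\ast}(0)\,P(q=0)$. A point $(x,y)\in\mathbb{R}^2$ is called $(f,g)$-achievable if there exist probability measures $P,Q$ on some common measurable space ($\sigma$-algebra) such that $(x,y)=(D_f(P,Q),D_g(P,Q))$. *)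

From HB Require Import structures.
From mathcomp Require Import all_boot all_order all_algebra.
From mathcomp Require Import all_classical all_reals all_analysis.
Set Implicit Arguments. Unset Strict Implicit. Unset Printing Implicit Defensive.
Import Order.TTheory GRing.Theory Num.Theory.
Import numFieldNormedType.Exports.
Local Open Scope classical_set_scope.
Local Open Scope ring_scope.

Section FDiv.
Variable R : realType.

Definition convex_on_pos (f : R -> R) : Prop :=
  forall x y t : R, 0 < x -> 0 < y -> 0 <= t -> t <= 1 ->
    f (t * x + (1 - t) * y) <= t * f x + (1 - t) * f y.

Definition f_at0 (f : R -> R) : \bar R :=
  lim ((fun t => (f t)%:E) @ 0^'+).

Definition fstar_at0 (f : R -> R) : \bar R :=
  lim ((fun t => (f t / t)%:E) @ +oo).

Definition fext (f : R -> R) (t : R) : \bar R :=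
  if 0 < t then (f t)%:E else f_at0 f.

Definition is_density {d} {T : measurableType d}
  (mu : {measure set T -> \bar R}) (P : set T -> \bar R) (p : T -> R) : Prop :=
  [/\ measurable_fun setT p, (forall x, 0 <= p x) &
      forall A, measurable A -> P A = (\int[mu]_(x in A) (p x)%:E)%E].

Definition fdiv (f : R -> R) {d} {T : measurableType d}
  (P Q : probability T R) (p q : T -> R) : \bar R :=
  ((\int[Q]_(x in [set x | (0 < q x)%R]) fext f (p x / q x)%R)
   + fstar_at0 f * P [set x | q x = 0%R])%E.

Definition achievable (f g : R -> R) (xy : R * R) : Prop :=
  exists (d : measure_display) (T : measurableType d)
    (mu : {measure set T -> \bar R}) (P Q : probability T R) (p q : T -> R),
    [/\ is_density mu P p, is_density mu Q q,
        fdiv f P Q p q = xy.1%:E & fdiv g P Q p q = xy.2%:E].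

End FDiv.

From HB Require Import structures.
From mathcomp Require Import all_boot all_order all_algebra.
From mathcomp Require Import all_classical all_reals all_analysis.
From mathcomp Require Import measurable_realfun.
From mathcomp Require Import ring lra.
Import Order.TTheory GRing.Theory Num.Theory.
Local Open Scope classical_set_scope.
Local Open Scope ring_scope.

(* Realise a with (P1, Q1) on T1 and b with (P2, Q2) on T2, and put the two
   pairs side by side on the disjoint union of T1 and T2 (encoded as
   T1 * T2 * bool, the unused coordinate being a default point), mixing them
   with weights t and 1 - t.  If the reference measures are mixed with the same
   weights, the densities are unchanged on each piece, so p/q restricts to
   p1/q1 and p2/q2: both the integral over {q > 0} and the singular part
   P(q = 0) of D_f split as t * (...) + (1 - t) * (...), hence
   D_f(P, Q) = t D_f(P1, Q1) + (1 - t) D_f(P2, Q2), and likewise for g.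
   Convexity is only used to make f measurable. *)

Section convex_measurable.
Variable R : realType.
Implicit Types f : R -> R.

Lemma convex_on_pos_lt_interval f (a : R) : convex_on_pos f ->
  is_interval ([set x | 0 < x] `&` [set x | f x < a]).
Proof.
move=> cf x y [/= x0 fxa] [/= y0 fya] z /andP[xz zy].
split=> /=; first exact: lt_le_trans xz.
have [lxy|yx] := ltrP x y; last first.
  by have -> : z = x by apply/eqP; rewrite eq_le xz (le_trans zy yx).
pose l := (y - z) / (y - x).
have -> : z = l * x + (1 - l) * y by rewrite /l; field; rewrite subr_eq0 gt_eqF.
have l0 : 0 <= l by rewrite /l divr_ge0 // subr_ge0 // ltW.
have l1 : l <= 1 by rewrite /l ler_pdivrMr ?subr_gt0 // mul1r; lra.
apply: le_lt_trans (cf x y l x0 y0 l0 l1) _.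
have max_lt : Num.max (f x) (f y) < a by rewrite gt_max fxa fya.
apply: le_lt_trans max_lt.
have : l * f x + (1 - l) * f y <=
       l * Num.max (f x) (f y) + (1 - l) * Num.max (f x) (f y).
  by rewrite lerD // ler_wpM2l ?subr_ge0 // ?le_max lexx ?orbT.
lra.
Qed.

Lemma measurable_convex_on_pos f : convex_on_pos f ->
  measurable_fun [set x : R | 0 < x] f.
Proof.
move=> cf; apply: (measurability _ (RGenInftyO.measurableE R)) => //.
move=> _ [_ [a ->] <-]; apply: is_interval_measurable.
rewrite (_ : _ @^-1` _ = [set x | f x < a]); last first.
  by apply/seteqP; split => x /=; rewrite in_itv.
exact: convex_on_pos_lt_interval.
Qed.

Lemma measurable_invr : measurable_fun [set: R] (@GRing.inv R).
Proof.
rewrite (_ : GRing.inv = fun x : R => if x == 0 then 0 else x^-1); last first.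
  by apply/funext => x; case: eqP => // ->; rewrite invr0.
apply: measurable_fun_if => //; first exact: measurable_fun_eqr.
rewrite (_ : _ `&` _ = [set x | x != 0]); last first.
  by apply/seteqP; split => x /=; [case => _; move/negbT|move=> /negbTE ->].
apply: open_continuous_measurable_fun; first exact: open_neq.
by move=> x; rewrite inE => x0; exact: inv_continuous.
Qed.

Lemma measurable_fext f : convex_on_pos f -> measurable_fun [set: R] (fext f).
Proof.
move=> cf; apply: measurable_fun_if => //; first exact: measurable_fun_ltr.
rewrite setTI; apply: measurableT_comp => //.
exact: measurable_convex_on_pos.
Qed.

End convex_measurable.

Section ereal_combination.
Variable R : realType.
Local Open Scope ereal_scope.

Lemma ge0_subD_EFin (A B X : \bar R) (a : R) : 0 <= A -> 0 <= B ->
  A - B + X = a%:E -> exists a' b' x', [/\ A = a'%:E, B = b'%:E & X = x'%:E].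
Proof. by case: A B X => [a'| |] [b'| |] [x'| |] //= *; exists a', b', x'. Qed.

(* The shape of [fdiv] after [integralE]: positive, negative and singular part. *)
Lemma ge0_subD_conv (t s : R) (A1 B1 E1 A2 B2 E2 c : \bar R) (a1 a2 : R) :
  (0 <= t)%R -> (0 <= s)%R -> 0 <= A1 -> 0 <= B1 -> 0 <= E1 ->
  0 <= A2 -> 0 <= B2 -> 0 <= E2 ->
  A1 - B1 + c * E1 = a1%:E -> A2 - B2 + c * E2 = a2%:E ->
  (t%:E * A1 + s%:E * A2) - (t%:E * B1 + s%:E * B2) + c * (t%:E * E1 + s%:E * E2)
   = (t * a1 + s * a2)%:E.
Proof.
move=> t0 s0 A10 B10 E10 A20 B20 E20 h1 h2.
rewrite ge0_muleDr ?mule_ge0 // (muleCA c t%:E) (muleCA c s%:E).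
have [a1' [b1' [x1' [eA1 eB1 e1]]]] := ge0_subD_EFin _ _ _ _ A10 B10 h1.
have [a2' [b2' [x2' [eA2 eB2 e2]]]] := ge0_subD_EFin _ _ _ _ A20 B20 h2.
move: h1 h2; rewrite eA1 eB1 e1 eA2 eB2 e2 -!EFinM -!EFinN -!EFinD => -[<-] [<-].
congr EFin; ring.
Qed.

End ereal_combination.

Section disjoint_union.
Context {d1 d2 : measure_display} {T1 : measurableType d1} {T2 : measurableType d2}
  {R : realType}.
Local Notation T := (T1 * T2 * bool)%type.

Definition inj1 (x : T1) : T := (x, point, true).
Definition inj2 (y : T2) : T := (point, y, false).

Lemma measurable_inj1 : measurable_fun setT inj1.
Proof. by apply: measurable_fun_pair => //; apply: measurable_fun_pair. Qed.

Lemma measurable_inj2 : measurable_fun setT inj2.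
Proof. by apply: measurable_fun_pair => //; apply: measurable_fun_pair. Qed.

HB.instance Definition _ := isMeasurableFun.Build _ _ _ _ inj1 measurable_inj1.
HB.instance Definition _ := isMeasurableFun.Build _ _ _ _ inj2 measurable_inj2.

Definition join_fun (h1 : T1 -> R) (h2 : T2 -> R) (z : T) : R :=
  if z.2 then h1 z.1.1 else h2 z.1.2.

Lemma measurable_join_fun h1 h2 : measurable_fun setT h1 ->
  measurable_fun setT h2 -> measurable_fun setT (join_fun h1 h2).
Proof.
move=> mh1 mh2; apply: measurable_fun_ifT; first exact: measurable_snd.
- by apply: measurableT_comp => //; apply: measurableT_comp.
- by apply: measurableT_comp => //; apply: measurableT_comp.
Qed.

Definition mix_measure (t s : {nonneg R}) (m1 : {measure set T1 -> \bar R})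
  (m2 : {measure set T2 -> \bar R}) : {measure set T -> \bar R}.
Proof.
(* The measure structure of [pushforward] is conditional on measurability. *)
refine (measure_add (mscale t (pushforward m1 inj1 : {measure set T -> \bar R}))
                    (mscale s (pushforward m2 inj2 : {measure set T -> \bar R}))).
all: exact: measurable_funPT.
Defined.

Local Open Scope ereal_scope.

Lemma mix_measureE t s m1 m2 A : mix_measure t s m1 m2 A =
  t%:num%:E * m1 (inj1 @^-1` A) + s%:num%:E * m2 (inj2 @^-1` A).
Proof. exact: measure_addE. Qed.

Lemma ge0_integral_mix_measure t s m1 m2 (D : set T) (G : T -> \bar R) :
  measurable D -> measurable_fun [set: T] G -> (forall z, 0 <= G z) ->
  \int[mix_measure t s m1 m2]_(z in D) G z =
  t%:num%:E * \int[m1]_(x in inj1 @^-1` D) (G \o inj1) x +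
  s%:num%:E * \int[m2]_(y in inj2 @^-1` D) (G \o inj2) y.
Proof.
move=> mD mG G0; have mGD : measurable_fun D G by exact: measurable_funTS.
rewrite ge0_integral_measure_add // ?ge0_integral_mscale //.
congr (_ * _ + _ * _).
- exact: ge0_integral_pushforward.
- exact: ge0_integral_pushforward.
Qed.

Section mix_probability.
Variables (t s : {nonneg R}).
Hypothesis ts1 : (t%:num + s%:num = 1)%R.
Variables (P1 : probability T1 R) (P2 : probability T2 R).

Let mix_measure_setT : mix_measure t s P1 P2 setT = 1.
Proof.
rewrite mix_measureE !preimage_setT.
rewrite (_ : (P1 : {measure set T1 -> \bar R}) setT = 1); last exact: probability_setT.
rewrite (_ : (P2 : {measure set T2 -> \bar R}) setT = 1); last exact: probability_setT.
by rewrite !mule1 -EFinD ts1.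
Qed.

Definition mix_probability : probability T R :=
  HB.pack_for (probability T R) (mix_measure t s P1 P2 : set T -> \bar R)
    (Measure.class (mix_measure t s P1 P2))
    (Measure_isProbability.Build _ _ _ _ mix_measure_setT).

Lemma mix_probabilityE A : mix_probability A =
  t%:num%:E * P1 (inj1 @^-1` A) + s%:num%:E * P2 (inj2 @^-1` A).
Proof. exact: mix_measureE. Qed.

Lemma ge0_integral_mix_probability (D : set T) (G : T -> \bar R) :
  measurable D -> measurable_fun [set: T] G -> (forall z, 0 <= G z) ->
  \int[mix_probability]_(z in D) G z =
  t%:num%:E * \int[P1]_(x in inj1 @^-1` D) (G \o inj1) x +
  s%:num%:E * \int[P2]_(y in inj2 @^-1` D) (G \o inj2) y.
Proof. exact: ge0_integral_mix_measure. Qed.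

End mix_probability.
End disjoint_union.

Arguments mix_probability {d1 d2 T1 T2 R t s}.

Section fdiv_mixture.
Context d1 d2 (T1 : measurableType d1) (T2 : measurableType d2) (R : realType).
Variables (t s : {nonneg R}).
Hypothesis ts1 : t%:num + s%:num = 1.

Lemma is_density_mix (mu1 : {measure set T1 -> \bar R}) (mu2 : {measure set T2 -> \bar R})
    (P1 : probability T1 R) (P2 : probability T2 R) (p1 : T1 -> R) (p2 : T2 -> R) :
  is_density mu1 P1 p1 -> is_density mu2 P2 p2 ->
  is_density (mix_measure t s mu1 mu2) (mix_probability ts1 P1 P2) (join_fun p1 p2).
Proof.
move=> [mp1 p1_ge0 P1E] [mp2 p2_ge0 P2E]; split.
- exact: measurable_join_fun.
- by case=> [[x y] []]; rewrite /join_fun /=.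
- move=> A mA; rewrite mix_probabilityE ge0_integral_mix_measure //.
  + by rewrite P1E ?P2E //; exact: measurable_funPTI.
  + by apply: measurableT_comp => //; exact: measurable_join_fun.
  + by case=> [[x y] []]; rewrite lee_fin /join_fun /=.
Qed.

Lemma fdiv_mix (f : R -> R) (P1 Q1 : probability T1 R) (P2 Q2 : probability T2 R)
    (p1 q1 : T1 -> R) (p2 q2 : T2 -> R) (x1 x2 : R) :
  convex_on_pos f ->
  measurable_fun setT p1 -> measurable_fun setT q1 ->
  measurable_fun setT p2 -> measurable_fun setT q2 ->
  fdiv f P1 Q1 p1 q1 = x1%:E -> fdiv f P2 Q2 p2 q2 = x2%:E ->
  fdiv f (mix_probability ts1 P1 P2) (mix_probability ts1 Q1 Q2)
    (join_fun p1 p2) (join_fun q1 q2) = (t%:num * x1 + s%:num * x2)%:E.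
Proof.
move=> cf mp1 mq1 mp2 mq2.
have mp := measurable_join_fun _ _ mp1 mp2.
have mq := measurable_join_fun _ _ mq1 mq2.
have mF : measurable_fun setT
    (fun z => fext f (join_fun p1 p2 z / join_fun q1 q2 z)).
  apply: measurableT_comp; first exact: measurable_fext.
  exact: measurable_funM mp (measurableT_comp (measurable_invr R) mq).
have mD : measurable [set z | 0 < join_fun q1 q2 z].
  rewrite (_ : [set z | _] = setT `&` join_fun q1 q2 @^-1` `]0, +oo[).
    exact: mq.
  by apply/seteqP; split => z /=; rewrite in_itv /= andbT // => -[].
rewrite /fdiv integralE => h1; rewrite integralE => h2; rewrite integralE.
rewrite !ge0_integral_mix_probability //; last 2 first.
- exact: measurable_funeneg.
- exact: measurable_funepos.
rewrite -!funepos_comp -!funeneg_comp mix_probabilityE.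
move: h1 h2; apply: ge0_subD_conv => //.
all: by apply: integral_ge0 => x _; rewrite ?funepos_ge0 ?funeneg_ge0.
Qed.

End fdiv_mixture.

Theorem theorem1 (R : realType) (f g : R -> R) :
  convex_on_pos f -> convex_on_pos g -> f 1 = 0 -> g 1 = 0 ->
  forall (a b : R * R) (t : R), 0 <= t -> t <= 1 ->
    achievable f g a -> achievable f g b ->
    achievable f g (t * a.1 + (1 - t) * b.1, t * a.2 + (1 - t) * b.2).
Proof.
move=> cf cg _ _ a b t t0 t1
  [d1 [T1 [mu1 [P1 [Q1 [p1 [q1 [dP1 dQ1 fa ga]]]]]]]]
  [d2 [T2 [mu2 [P2 [Q2 [p2 [q2 [dP2 dQ2 fb gb]]]]]]]].
have s0 : 0 <= 1 - t by rewrite subr_ge0.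
have ts1 : (NngNum t0)%:num + (NngNum s0)%:num = 1 by rewrite /= addrC subrK.
have [[mp1 _ _] [mq1 _ _]] := (dP1, dQ1).
have [[mp2 _ _] [mq2 _ _]] := (dP2, dQ2).
exists _, _, (mix_measure (NngNum t0) (NngNum s0) mu1 mu2),
  (mix_probability ts1 P1 P2), (mix_probability ts1 Q1 Q2),
  (join_fun p1 p2), (join_fun q1 q2).
by split; [exact: is_density_mix | exact: is_density_mix | exact: fdiv_mix | exact: fdiv_mix].
Qed.
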